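(* A flow $v$ on a connected compact surface $S$ is minimal if and only if $\mathrm{LD}(v)=S$.
   Context: A surface is a two-dimensional paracompact manifold, possibly with boundary. A flow is a continuous $\mathbb{R}$-action $v$ on $S$; it is minimal if $S$ has no nonempty proper closed invariant subsets. A point is singular if fixed by the flow, periodic if non-singular with $v_T(x)=x$ for some $T>0$, closed if singular or periodic. An orbit is locally dense if its closure has nonempty interior; $\mathrm{LD}(v)$ is the union of non-closed locally dense orbits. *)

From HB Require Import structures.
From mathcomp Require Import all_boot all_order all_algebra.
From mathcomp Require Import all_classical all_reals all_analysis.
Set Implicit Arguments. Unset Strict Implicit. Unset Printing Implicit Defensive.
Import Order.TTheory GRing.Theory Num.Theory.
Import numFieldTopology.Exports.
Local Open Scope classical_set_scope.
Local Open Scope ring_scope.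

Definition half_plane (R : realType) : set (R * R) := [set p | 0 <= p.2].

(* S is a topological 2-manifold, possibly with boundary: Hausdorff, and every
   point has an open neighbourhood U homeomorphic (via f, with inverse g) to an
   open subset W `&` half_plane of the closed half-plane. *)
Definition is_surface (R : realType) (S : topologicalType) : Prop :=
  hausdorff_space S /\
  forall x : S, exists (U : set S) (W : set (R * R)) (f : S -> R * R) (g : R * R -> S),
    [/\ open U, U x, open W & f @` U = W `&` @half_plane R] /\
    [/\ {within U, continuous f},
        {within W `&` @half_plane R, continuous g},
        (forall y, U y -> g (f y) = y) &
        (forall p, (W `&` @half_plane R) p -> f (g p) = p)].

Definition is_flow (R : realType) (S : topologicalType) (v : R -> S -> S) : Prop :=
  [/\ continuous (fun p : R * S => v p.1 p.2),
      (forall x, v 0 x = x) &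
      (forall s t x, v (s + t) x = v s (v t x))].

Definition invariant (R : realType) (S : Type) (v : R -> S -> S) (A : set S) : Prop :=
  forall t x, A x -> A (v t x).

Definition minimal_flow (R : realType) (S : topologicalType) (v : R -> S -> S) : Prop :=
  forall A : set S, closed A -> invariant v A -> A = set0 \/ A = setT.

Definition orbit (R : realType) (S : Type) (v : R -> S -> S) (x : S) : set S :=
  [set v t x | t in [set: R]].

Definition singular_pt (R : realType) (S : Type) (v : R -> S -> S) (x : S) : Prop :=
  forall t, v t x = x.

Definition periodic_pt (R : realType) (S : Type) (v : R -> S -> S) (x : S) : Prop :=
  ~ singular_pt v x /\ exists T : R, 0 < T /\ v T x = x.

Definition closed_pt (R : realType) (S : Type) (v : R -> S -> S) (x : S) : Prop :=
  singular_pt v x \/ periodic_pt v x.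

Definition locally_dense (R : realType) (S : topologicalType) (v : R -> S -> S) (x : S) : Prop :=
  (closure (orbit v x))^° !=set0.

Definition LD (R : realType) (S : topologicalType) (v : R -> S -> S) : set S :=
  [set x | ~ closed_pt v x /\ locally_dense v x].

From Pilot Require Import Defs.
From HB Require Import structures.
From mathcomp Require Import all_boot all_order all_algebra.
From mathcomp Require Import all_classical all_reals all_analysis.
From mathcomp Require Import ring lra.
Import Order.TTheory GRing.Theory Num.Theory.
Import numFieldTopology.Exports.
Local Open Scope classical_set_scope.
Local Open Scope ring_scope.

(* If v is minimal, the closure of every orbit is a nonempty closed invariant
   set, hence all of S, so every orbit is locally dense; and no orbit is closed,
   for a closed orbit would itself be all of S.  A surface is not a point, and
   it is not a circle: a chart around a point of a periodic orbit filling S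
   would map a small square continuously and injectively into a short arc of
   that orbit.  That is impossible: of the times of three corners of the
   square one lies strictly between the other two, yet the segment joining
   those two corners avoids the third, so its connected image stays on one
   side of the middle time.
   Conversely, if LD(v) = S, a nonempty closed invariant set A contains the
   orbit closure of each of its points x; the flow pulls the interior of that
   closure back to a neighbourhood of x, so A is open, hence A = S. *)

Lemma continuous_within_comp {T U V : topologicalType} {A : set T} {B : set U}
    {f : T -> U} {g : U -> V} :
  continuous f -> (forall x, A x -> B (f x)) -> {within B, continuous g} ->
  {within A, continuous (g \o f)}.
Proof.
move=> cf fAB /subspace_continuousP cg; apply/subspace_continuousP => x Ax.
apply: (cvg_comp f g _ (cg _ (fAB _ Ax))) => P /= BP.
have fBP : nbhs x (fun y => B (f y) -> P (f y)) := cf x _ BP.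
by apply: filterS fBP => y BPy Ay; exact/BPy/fAB.
Qed.

Section Segment.
Context {R : realType}.

Definition square (p : R * R) (e : R) : set (R * R) :=
  `[p.1, p.1 + e] `*` `[p.2, p.2 + e].

Definition segment (A B : R * R) (u : R) : R * R :=
  (A.1 + u * (B.1 - A.1), A.2 + u * (B.2 - A.2)).

Lemma continuous_segment A B : continuous (segment A B).
Proof.
have affine (a d : R) : continuous (fun u : R => a + u * d).
  by move=> u; apply: cvgD; [exact: cvg_cst | exact: mulrr_continuous].
by move=> u; exact: (cvg_pair (affine _ _ u) (affine _ _ u)).
Qed.

Lemma segment0 A B : segment A B 0 = A.
Proof. by case: A => a1 a2; rewrite /segment /= !mul0r !addr0. Qed.

Lemma segment1 A B : segment A B 1 = B.
Proof. by case: B => b1 b2; rewrite /segment /= !mul1r !subrKC. Qed.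

Lemma segment_square {p e A B u} : square p e A -> square p e B -> u \in `[0, 1] ->
  square p e (segment A B u).
Proof.
rewrite /square /segment /= !in_itv /=.
move=> [/andP[a1 a1'] /andP[a2 a2']] [/andP[b1 b1'] /andP[b2 b2']] /andP[u0 u1].
by split; apply/andP; split; nra.
Qed.

End Segment.

Section Arc.
Context {R : realType} {Y : topologicalType} {c : R -> Y} {lo hi : R}.
Hypotheses (Y_hausdorff : hausdorff_space Y) (c_cont : continuous c)
  (c_inj : {in `[lo, hi] &, injective c}).

Lemma closed_segment_image a b : closed (c @` `[a, b]).
Proof.
apply: compact_closed Y_hausdorff _; apply: continuous_compact.
  exact: continuous_subspaceT.
exact: segment_compact.
Qed.

Lemma arc_image_mem {a b s} : lo <= a -> b <= hi -> s \in `[lo, hi] ->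
  (c @` `[a, b]) (c s) -> s \in `[a, b].
Proof.
move=> loa bhi slh [t tab /c_inj <-] //.
move: tab; rewrite /= !in_itv /= => /andP[ta tb].
by rewrite (le_trans loa) ?(le_trans tb).
Qed.

Lemma connected_arc_one_side (G : set Y) a b m :
  connected G -> G `<=` c @` `[lo, hi] -> ~ G (c m) -> G (c a) -> G (c b) ->
  a \in `[lo, hi] -> b \in `[lo, hi] -> m \in `[lo, hi] ->
  (a <= m /\ b <= m) \/ (m <= a /\ m <= b).
Proof.
move=> Gconn Garc Gm Ga Gb alh blh mlh.
have /[!in_itv]/= /andP[lom mhi] := mlh.
set C1 := c @` `[lo, m]; set C2 := c @` `[m, hi].
have C12 y : C1 y -> C2 y -> y = c m.
  case=> s slm <-{y} C2s.
  have slh : s \in `[lo, hi].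
    by move: slm; rewrite /= !in_itv /= => /andP[-> /le_trans->].
  have := arc_image_mem lom (lexx _) slh C2s; move: slm; rewrite /= !in_itv /=.
  by move=> /andP[_ sm] /andP[ms _]; have -> : s = m by apply/le_anti; rewrite sm ms.
have closureC1 : closure C1 = C1 by apply/esym/closure_id/closed_segment_image.
have closureC2 : closure C2 = C2 by apply/esym/closure_id/closed_segment_image.
have sep : separated (C1 `&` G) (C2 `&` G).
  split; apply/seteqP; split=> // y [].
    move=> /closureI[+ _]; rewrite closureC1 => C1y [C2y Gy].
    by apply: Gm; rewrite -(C12 y).
  move=> [C1y Gy] /closureI[+ _]; rewrite closureC2 => C2y.
  by apply: Gm; rewrite -(C12 y).
have cover : G `<=` (C1 `&` G) `|` (C2 `&` G).
  move=> y Gy; have [s + ey] := Garc _ Gy; rewrite /= in_itv /= => /andP[los shi].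
  have [sm|ms] := leP s m; [left | right]; split=> //; exists s => //=;
    by rewrite in_itv /= ?los ?shi ?sm ?ltW.
have le_m s : s \in `[lo, hi] -> C1 (c s) -> s <= m.
  by move=> slh /(arc_image_mem (lexx _) mhi slh); rewrite in_itv /= => /andP[].
have ge_m s : s \in `[lo, hi] -> C2 (c s) -> m <= s.
  by move=> slh /(arc_image_mem lom (lexx _) slh); rewrite in_itv /= => /andP[].
have [GC|GC] := connected_subset sep cover Gconn; [left | right].
  by split; [apply: le_m alh (GC _ Ga).1 | apply: le_m blh (GC _ Gb).1].
by split; [apply: ge_m alh (GC _ Ga).1 | apply: ge_m blh (GC _ Gb).1].
Qed.

Section SquareInArc.
Context {g : R * R -> Y} {p : R * R} {e : R}.
Hypotheses (g_cont : {within square p e, continuous g})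
  (g_inj : {in square p e &, injective g})
  (g_arc : g @` square p e `<=` c @` `[lo, hi]).

Lemma square_segment_one_side {A B Q a b m} :
  square p e A -> square p e B -> square p e Q -> ~ (segment A B @` `[0, 1]) Q ->
  g A = c a -> g B = c b -> g Q = c m ->
  a \in `[lo, hi] -> b \in `[lo, hi] -> m \in `[lo, hi] ->
  (a <= m /\ b <= m) \/ (m <= a /\ m <= b).
Proof.
move=> DA DB DQ ABQ gA gB gQ.
apply: (connected_arc_one_side ((g \o segment A B) @` `[0, 1])).
- apply: connected_continuous_connected; first exact: segment_connected.
  apply: continuous_within_comp (continuous_segment A B) _ g_cont => u.
  exact: segment_square.
- move=> _ [u u01 <-]; apply: g_arc.
  by exists (segment A B u) => //; exact: segment_square DA DB u01.
- move=> [u u01 /= guQ]; apply: ABQ; exists u => //.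
  by apply: g_inj; rewrite ?inE ?guQ ?gQ //; exact: segment_square DA DB u01.
- by exists 0; rewrite /= ?segment0 // in_itv /= lexx ler01.
- by exists 1; rewrite /= ?segment1 // in_itv /= lexx ler01.
Qed.

Lemma square_not_in_arc : 0 < e -> False.
Proof.
move=> e0.
set P1 := (p.1 + e, p.2); set P2 := (p.1, p.2 + e).
have corner z : z = p \/ z = P1 \/ z = P2 -> square p e z.
  by rewrite /square /= !in_itv /=; case=> [|[]] ->; split; apply/andP; split=> /=; lra.
have time z : square p e z -> exists2 t, t \in `[lo, hi] & g z = c t.
  by move=> Dz; have [t + <-] := g_arc _ (imageP g Dz); exists t.
have apart z w s t : square p e z -> square p e w -> z <> w -> g z = c s -> g w = c t ->
    s < t \/ t < s.
  move=> Dz Dw zw gz gw; have : s != t.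
    by apply/eqP => st; apply: zw; apply: g_inj; rewrite ?inE // gz gw st.
  by move/lt_total/orP.
have D0 : square p e p by apply: corner; left.
have D1 : square p e P1 by apply: corner; right; left.
have D2 : square p e P2 by apply: corner; right; right.
have [t0 t0lh g0] := time p D0.
have [t1 t1lh g1] := time P1 D1.
have [t2 t2lh g2] := time P2 D2.
have t01 : t0 < t1 \/ t1 < t0 by apply: apart D0 D1 _ g0 g1 => /(congr1 fst) /=; lra.
have t02 : t0 < t2 \/ t2 < t0 by apply: apart D0 D2 _ g0 g2 => /(congr1 snd) /=; lra.
have t12 : t1 < t2 \/ t2 < t1 by apply: apart D1 D2 _ g1 g2 => /(congr1 fst) /=; lra.
have avoid0 : ~ (segment P1 P2 @` `[0, 1]) p.
  by case=> u _ E; move: (congr1 fst E) (congr1 snd E); rewrite /segment /=; lra.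
have avoid1 : ~ (segment p P2 @` `[0, 1]) P1.
  by case=> u _ /(congr1 fst); rewrite /segment /=; lra.
have avoid2 : ~ (segment p P1 @` `[0, 1]) P2.
  by case=> u _ /(congr1 snd); rewrite /segment /=; lra.
have := square_segment_one_side D1 D2 D0 avoid0 g1 g2 g0 t1lh t2lh t0lh.
have := square_segment_one_side D0 D2 D1 avoid1 g0 g2 g1 t0lh t2lh t1lh.
have := square_segment_one_side D0 D1 D2 avoid2 g0 g1 g2 t0lh t1lh t2lh.
lra.
Qed.
End SquareInArc.
End Arc.

Section FlowTheory.
Context {R : realType} {S : topologicalType} {v : R -> S -> S}.
Hypothesis v_flow : is_flow v.

Lemma flowD s t x : v (s + t) x = v s (v t x).
Proof. by case: v_flow. Qed.

Lemma flow0 x : v 0 x = x.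
Proof. by case: v_flow. Qed.

Lemma flowK t : cancel (v t) (v (- t)).
Proof. by move=> x; rewrite -flowD addNr flow0. Qed.

Lemma continuous_flow_time x : continuous (v ^~ x).
Proof.
case: v_flow => cv _ _ t.
apply: (continuous_comp (f := fun t => (t, x)) (g := fun p => v p.1 p.2)) (cv _).
exact: (cvg_pair cvg_id (cvg_cst x)).
Qed.

Lemma continuous_flow t : continuous (v t).
Proof.
case: v_flow => cv _ _ x.
apply: (continuous_comp (f := fun x => (t, x)) (g := fun p => v p.1 p.2)) (cv _).
exact: (cvg_pair (cvg_cst t) cvg_id).
Qed.

Lemma orbit_flow x t : Defs.orbit v x (v t x).
Proof. by exists t. Qed.

Lemma orbit_id x : Defs.orbit v x x.
Proof. by exists 0; rewrite ?flow0. Qed.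

Lemma invariant_orbit x : Defs.invariant v (Defs.orbit v x).
Proof. by move=> t _ [s _ <-]; rewrite -flowD; apply: orbit_flow. Qed.

Lemma invariant_closure A : Defs.invariant v A -> Defs.invariant v (closure A).
Proof.
move=> Ainv t x Ax B /(continuous_flow t x) /Ax [y [Ay /= By]].
by exists (v t y); split => //; apply: Ainv.
Qed.

Lemma closure_orbit_subset {A : set S} {x : S} :
  closed A -> Defs.invariant v A -> A x -> closure (Defs.orbit v x) `<=` A.
Proof.
move=> Acl Ainv Ax; rewrite (closure_id A).1 //.
by apply: closureS => _ [t _ <-]; apply: Ainv.
Qed.

Lemma locally_dense_interior {A : set S} {x : S} :
  closed A -> Defs.invariant v A -> A x -> locally_dense v x -> A° x.
Proof.
move=> Acl Ainv Ax [z Oz].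
have Oz_nbhs : nbhs z (closure (Defs.orbit v x))°.
  by apply: open_nbhs_nbhs; split=> //; exact: open_interior.
have [_ [[t _ <-] Ot]] := interior_subset Oz _ Oz_nbhs.
have Ot_pre : nbhs x (v t @^-1` closure (Defs.orbit v x)) := continuous_flow t x _ Ot.
apply: filterS Ot_pre => y /= /(closure_orbit_subset Acl Ainv Ax).
by move=> /(Ainv (- t)); rewrite flowK.
Qed.

Lemma LD_setT_minimal : connected [set: S] -> LD v = [set: S] -> minimal_flow v.
Proof.
move=> Sconn LDT A Acl Ainv; have [->|/set0P[x Ax]] := eqVneq A set0; first by left.
right; apply: Sconn; first by exists x.
  exists A; rewrite ?setTI // openE => y Ay.
  by apply: locally_dense_interior => //; have [] : LD v y by rewrite LDT.
by exists A; rewrite ?setTI.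
Qed.

Lemma flow_period_mulz {d : R} {x : S} (k : int) : v d x = x -> v (k%:~R * d) x = x.
Proof.
move=> vd; have vn n : v (n%:R * d) x = x.
  by elim: n => [|n IH]; rewrite ?mul0r ?flow0 // mulrSr mulrDl mul1r flowD vd IH.
case: k => n; first by rewrite -pmulrn vn.
by rewrite NegzE mulrNz mulNr -[in LHS](vn n.+1) -pmulrn flowK.
Qed.

Lemma flow_period_window {d : R} {x : S} (a t : R) : 0 < d -> v d x = x ->
  exists2 t', a <= t' < a + d & v t x = v t' x.
Proof.
move=> d0 vd; set k := Num.floor ((t - a) / d).
exists (t - k%:~R * d); last first.
  by rewrite -[in RHS](flow_period_mulz k vd) -flowD subrK.
have /andP[kle klt] := floor_itv ((t - a) / d); rewrite -/k intrD in klt.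
have e1 : k%:~R * d <= t - a by rewrite -ler_pdivlMr.
have e2 : t - a < (k%:~R + 1) * d by rewrite -ltr_pdivrMr.
by apply/andP; split; lra.
Qed.

Lemma orbit_periodic {d : R} {x : S} :
  0 < d -> v d x = x -> Defs.orbit v x = v^~ x @` `[0, d].
Proof.
move=> d0 vd; apply/seteqP; split => _ [t _ <-]; last exact: orbit_flow.
have [t' /andP[t'0 t'd] ->] := flow_period_window 0 t d0 vd.
by exists t' => //; rewrite /= in_itv /= t'0 ltW // -(add0r d).
Qed.

Lemma min_period_inj {T0 : R} {x : S} (a b : R) :
  (forall t, 0 < t < T0 -> v t x <> x) -> b - a < T0 ->
  {in `[a, b] &, injective (v^~ x)}.
Proof.
move=> T0min baT0.
suff lt_inj s t : s \in `[a, b] -> t \in `[a, b] -> s < t -> v s x <> v t x.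
  move=> s t sab tab /= vst; case: (ltgtP s t) => // st.
    by case: (lt_inj s t sab tab st vst).
  by case: (lt_inj t s tab sab st (esym vst)).
rewrite !in_itv /= => /andP[sa sb] /andP[ta tb] st vst.
apply: (T0min (t - s)); first by apply/andP; split; lra.
by rewrite addrC flowD -vst flowK.
Qed.

Section Hausdorff.
Hypothesis S_hausdorff : hausdorff_space S.

Lemma closed_orbit_periodic {d : R} {x : S} :
  0 < d -> v d x = x -> closed (Defs.orbit v x).
Proof.
move=> d0 vd; rewrite (orbit_periodic d0 vd).
exact: closed_segment_image S_hausdorff (continuous_flow_time x) 0 d.
Qed.

Lemma singular_small_returns x :
  (forall e, 0 < e -> exists2 t, 0 < t < e & v t x = x) -> singular_pt v x.
Proof.
move=> returns s; apply/esym/S_hausdorff => A B xA vsB.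
exists (v s x); split; last exact: nbhs_singleton.
have := continuous_flow_time x 0; rewrite /continuous_at flow0 => /(_ _ xA).
move=> /nbhs_ballP[r r0 rA]; have [d /andP[d0 dr] vd] := returns r r0.
have [t /andP[t0 td] ->] := flow_period_window 0 s d0 vd.
by apply: rA; rewrite -ball_normE /= sub0r normrN ger0_norm //; lra.
Qed.

Lemma periodic_min_period {x : S} : periodic_pt v x ->
  exists T0, [/\ 0 < T0, v T0 x = x & forall t, 0 < t < T0 -> v t x <> x].
Proof.
case=> xns [T [T0 vT]].
have [e e0 gap] : exists2 e, 0 < e & forall t, 0 < t < e -> v t x <> x.
  apply: contrapT => nogap; apply/xns/singular_small_returns => e e0.
  apply: contrapT => noret; apply: nogap; exists e => // t te vt.
  by apply: noret; exists t.
have eT : e <= T by rewrite leNgt; apply/negP => Te; apply: (gap T) => //; rewrite T0.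
set C := [set t | v t x = x] `&` `[e, T].
have CT : C T by split => //=; rewrite in_itv /= eT lexx.
have Ccl : closed C.
  apply: closedI; last exact: itv_closed.
  apply: (continuous_closedP (v^~ x)).1 (continuous_flow_time x) [set x] _.
  exact/accessible_closed_set1/hausdorff_accessible.
have Ce t : C t -> e <= t by case=> _; rewrite /= in_itv /= => /andP[].
have Cinf : C (inf C).
  apply: (itv_closed_infimums _ Ccl); first by exists T.
  split; first by apply: ge_inf; exists e.
  by move=> y ly; apply: lb_le_inf => //; exists T.
case: (Cinf) => vI /=; rewrite in_itv /= => /andP[eI IT].
exists (inf C); split => //; first lra.
move=> t /andP[t0 tI] vt; have [te|et] := ltP t e; first by apply: (gap t); rewrite ?t0.
have Ct : C t by split => //=; rewrite in_itv /= et /=; lra.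
have := ge_inf (ex_intro _ e Ce) Ct; lra.
Qed.

Lemma periodic_orbit_near {T0 : R} {x : S} : 0 < T0 -> v T0 x = x ->
  (forall t, 0 < t < T0 -> v t x <> x) ->
  \forall y \near x, Defs.orbit v x y ->
    exists2 t, t \in `[- (T0 / 4), T0 / 4] & y = v t x.
Proof.
move=> T0pos vT0 T0min; set q := T0 / 4.
have T0q : T0 = 4 * q by rewrite /q; field.
set K := v^~ x @` `[q, 3 * q].
have xK : ~ K x.
  case=> t; rewrite /= in_itv /= => /andP[qt t3q].
  by apply: T0min; apply/andP; split; lra.
have : nbhs x (~` K).
  apply: open_nbhs_nbhs; split => //; apply: closed_openC.
  exact: closed_segment_image S_hausdorff (continuous_flow_time x) q (3 * q).
apply: filterS => y Ky [t0 _ t0y].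
have [t /andP[qt tT0] vt] := flow_period_window (- q) t0 T0pos vT0.
exists t; last by rewrite -t0y vt.
rewrite in_itv /= qt /= leNgt; apply/negP => tq; apply: Ky.
by exists t; [rewrite /= in_itv /=; apply/andP; split; lra | rewrite -t0y vt].
Qed.

End Hausdorff.

End FlowTheory.

Section Surface.
Context {R : realType} {S : topologicalType}.
Hypothesis S_surface : is_surface R S.

Lemma surface_square_chart {x : S} {N : set S} : nbhs x N ->
  exists (p : R * R) (e : R) (g : R * R -> S),
    [/\ 0 < e, {within square p e, continuous g}, {in square p e &, injective g}
      & g @` square p e `<=` N].
Proof.
move=> xN; case: S_surface => _ /(_ x).
move=> [U [W [f [g [[Uop Ux Wop fU] [_ gcont gf fg]]]]]].
set H := W `&` @half_plane R.
have Hfx : H (f x) by rewrite /H -fU; exists x.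
have gN : nbhs (f x) (fun z => H z -> N (g z)).
  by apply: ((subspace_continuousP _ _).1 gcont _ Hfx); rewrite /from_subspace gf.
have /nbhs_ballP[r /= r0 rWN] : nbhs (f x) (W `&` (fun z => H z -> N (g z))).
  by apply: filterI gN; apply: open_nbhs_nbhs; split => //; case: Hfx.
have sqH z : square (f x) (r / 2) z -> H z /\ N (g z).
  rewrite /square /= !in_itv /= => -[/andP[z1 z1'] /andP[z2 z2']].
  have Hz2 : @half_plane R z by move: Hfx => [_]; rewrite /half_plane /=; lra.
  have [Wz zN] : (W `&` (fun z => H z -> N (g z))) z.
    by apply: rWN; split; rewrite -ball_normE /= distrC ger0_norm; lra.
  by split; [|apply: zN]; split.
exists (f x), (r / 2), g; split.
- lra.
- by apply: continuous_subspaceW gcont => z /sqH[].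
- by move=> z w /set_mem/sqH[Hz _] /set_mem/sqH[Hw _] gzw; rewrite -(fg z) // gzw fg.
- by move=> _ [z /sqH[_ Nz] <-].
Qed.

Lemma surface_not_singleton (x : S) : [set: S] <> [set x].
Proof.
move=> Sx; have [p [e [g [e0 _ ginj gS]]]] := @surface_square_chart x setT filterT.
have corner0 : square p e p.
  by rewrite /square /= !in_itv /=; split; apply/andP; split; lra.
have corner1 : square p e (p.1 + e, p.2).
  by rewrite /square /= !in_itv /=; split; apply/andP; split; lra.
have : g p = g (p.1 + e, p.2).
  have : [set x] (g p) /\ [set x] (g (p.1 + e, p.2)) by rewrite -Sx.
  by move=> [-> ->].
by move=> /(ginj _ _ (mem_set corner0) (mem_set corner1)) /(congr1 fst) /=; lra.
Qed.

Lemma surface_periodic_orbit_neq_setT {v : R -> S -> S} {x : S} :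
  is_flow v -> periodic_pt v x -> Defs.orbit v x <> [set: S].
Proof.
move=> v_flow xper orbitT; have S_hausdorff := S_surface.1.
have [T0 [T0pos vT0 T0min]] := periodic_min_period v_flow S_hausdorff xper.
have near_x := periodic_orbit_near v_flow S_hausdorff T0pos vT0 T0min.
have [p [e [g [e0 gcont ginj gN]]]] := surface_square_chart near_x.
have c_inj : {in `[- (T0 / 4), T0 / 4] &, injective (v^~ x)}.
  by apply: (min_period_inj v_flow _ _ T0min); lra.
have orbit_cont := continuous_flow_time v_flow x.
apply: (square_not_in_arc S_hausdorff orbit_cont c_inj gcont ginj _ e0).
move=> _ [z Dz <-].
by have [|t tq ->] := gN _ (imageP g Dz); [rewrite orbitT | exists t].
Qed.

End Surface.

Lemma minimal_flow_setT {R : realType} {S : topologicalType} {v : R -> S -> S}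
    {A : set S} {x : S} :
  minimal_flow v -> closed A -> Defs.invariant v A -> A x -> A = [set: S].
Proof.
by move=> vmin Acl Ainv Ax; case: (vmin A Acl Ainv) => // A0; rewrite A0 in Ax.
Qed.

Lemma minimal_LD_setT {R : realType} {S : topologicalType} (v : R -> S -> S) :
  is_surface R S -> is_flow v -> minimal_flow v -> LD v = [set: S].
Proof.
move=> S_surface v_flow vmin; have S_hausdorff := S_surface.1.
apply/seteqP; split => // y _; split.
- case=> [ysing | yper].
    apply: (surface_not_singleton S_surface y).
    apply/esym/(minimal_flow_setT (x := y) vmin).
    - exact/accessible_closed_set1/hausdorff_accessible.
    - by move=> t z ->; apply: ysing.
    - by [].
  apply: (surface_periodic_orbit_neq_setT S_surface v_flow yper).
  have [_ [T [T0 vT]]] := yper.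
  have orbit_closed := closed_orbit_periodic v_flow S_hausdorff T0 vT.
  apply: minimal_flow_setT vmin orbit_closed _ (orbit_id v_flow y).
  exact: invariant_orbit.
- rewrite /locally_dense.
  have -> : closure (Defs.orbit v y) = [set: S].
    apply: minimal_flow_setT vmin (@closed_closure _ _) _
      (subset_closure (orbit_id v_flow y)).
    exact/(invariant_closure v_flow)/invariant_orbit.
  by rewrite interiorT; exists y.
Qed.

Theorem lemma4p1 (R : realType) (S : topologicalType) (v : R -> S -> S) :
  is_surface R S -> connected [set: S] -> compact [set: S] -> is_flow v ->
  (minimal_flow v <-> LD v = [set: S]).
Proof.
move=> S_surface S_connected _ v_flow.
by split; [exact: minimal_LD_setT | exact: LD_setT_minimal].
Qed.
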